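(* Let $(X,\mathtt{d})$ be an instance of metric $k$-center clustering with $z$ outliers, $|X|=n$, $\gamma=z/n$, and let $\epsilon>0$ and $\eta\in(0,1/2)$. Run Algorithm 1 (described in the context) with $t=\frac{ck}{1-\eta}$ where $c=2+\frac{2}{k(1-\eta)}\ln\frac{1}{\eta}$, and let $E$ be its output. Then with probability at least $1-2\eta$, $\phi_{\epsilon}(X,E)\leq 2r_{\mathtt{opt}}$.
   Context: Let $(X,\mathtt{d})$ be a finite metric space with $|X|=n$ and let $k,z$ be positive integers with $z<n$. The $k$-center clustering with $z$ outliers problem asks for $X'\subseteq X$ with $|X'|\geq n-z$ and centers $c_1,\dots,c_k\in X$ minimizing $\max_{p\in X'}\min_j\mathtt{d}(p,c_j)$; $r_{\mathtt{opt}}$ denotes the optimal value. For $p\in X$ and $E\subseteq X$, $\mathtt{d}(p,E)=\min_{q\in E}\mathtt{d}(p,q)$. For $\epsilon\geq 0$ and a set $A\subseteq X$ (of any size), $\phi_\epsilon(X,A)=\min\{\max_{p\in X'}\mathtt{d}(p,A)\;:\;X'\subseteq X,\ |X'|\geq n-(1+\epsilon)z\}$. Algorithm 1 (input $(X,\mathtt{d})$, $k,z$, parameters $\epsilon>0$, $\eta\in(0,1/2)$, $t\in\mathbb{Z}^+$): Let $\gamma=z/n$ and $E=\emptyset$. Set $j=1$ and add to $E$ a set of $\frac{1}{1-\gamma}\log\frac{1}{\eta}$ vertices selected uniformly at random from $X$. Then, while $j<t$: set $j=j+1$; let $Q_j$ be the set of the $(1+\epsilon)z$ vertices of $X$ farthest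 from $E$ (w.r.t. $\mathtt{d}(\cdot,E)$); add to $E$ a set of $\frac{1+\epsilon}{\epsilon}\log\frac{1}{\eta}$ vertices selected uniformly at random from $Q_j$. Output $E$. *)

From HB Require Import structures.
From mathcomp Require Import all_boot all_order all_algebra.
From mathcomp Require Import reals exp.
Set Implicit Arguments. Unset Strict Implicit. Unset Printing Implicit Defensive.
Import Order.TTheory GRing.Theory Num.Theory.
Local Open Scope ring_scope.

Section KCenter.
Variables (R : realType) (X : finType) (d : X -> X -> R).

Definition is_metric : Prop :=
  [/\ forall x y, 0 <= d x y,
      forall x y, d x y = 0 <-> x = y,
      forall x y, d x y = d y x &
      forall x y w, d x w <= d x y + d y w].

(* the diameter; used as the neutral element of finite minima
   (every quantity minimized below is bounded by it) *)
Definition diam : R := \big[Num.max/0]_(p : X) \big[Num.max/0]_(q : X) d p q.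

(* d(p, E) = min_{q in E} d(p, q)  (equals diam when E is empty) *)
Definition distS (p : X) (E : {set X}) : R := \big[Num.min/diam]_(q in E) d p q.

Definition radius (Xp A : {set X}) : R := \big[Num.max/0]_(p in Xp) distS p A.

Definition r_opt (k z : nat) : R :=
  \big[Num.min/diam]_(c : k.-tuple X)
     \big[Num.min/diam]_(Xp : {set X} | (#|X| - z <= #|Xp|)%N)
        radius Xp [set x in c].

Definition phi (eps : R) (z : nat) (A : {set X}) : R :=
  \big[Num.min/diam]_(Xp : {set X} | #|X|%:R - (1 + eps) * z%:R <= #|Xp|%:R)
     radius Xp A.

Definition ceiln (x : R) : nat := `|Num.ceil x|%N.

(* Q-selection rule: sel E is a set of the ceil((1+eps)z) vertices farthest from E
   (all of X if n is smaller); ties are broken arbitrarily. *)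
Definition farthest_rule (eps : R) (z : nat) (sel : {set X} -> {set X}) : Prop :=
  forall E : {set X},
    #|sel E| = minn #|X| (ceiln ((1 + eps) * z%:R)) /\
    (forall p q, q \in sel E -> p \notin sel E -> distS p E <= distS q E).

(* Probability that the algorithm, currently holding E with j loop iterations
   still to run, ends with an output satisfying P.  Each iteration draws m2
   independent uniform samples (with replacement) from Q = sel E. *)
Fixpoint succ_from (P : {set X} -> bool) (sel : {set X} -> {set X})
    (m2 : nat) (j : nat) (E : {set X}) : R :=
  match j with
  | 0 => (P E)%:R
  | j'.+1 =>
      (#|sel E| ^ m2)%:R^-1 *
      \sum_(s : m2.-tuple X | all (mem (sel E)) s)
         succ_from P sel m2 j' (E :|: [set x in s])
  end.

Definition alg1_prob (P : {set X} -> bool) (sel : {set X} -> {set X})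
    (k z : nat) (eps eta : R) : R :=
  let n := #|X| in
  let gamma := z%:R / n%:R in
  let m1 := ceiln ((1 - gamma)^-1 * ln (eta^-1)) in
  let m2 := ceiln ((1 + eps) / eps * ln (eta^-1)) in
  let c := 2 + 2 / (k%:R * (1 - eta)) * ln (eta^-1) in
  let t := ceiln (c * k%:R / (1 - eta)) in
  (n ^ m1)%:R^-1 *
  \sum_(s : m1.-tuple X) succ_from P sel m2 t.-1 [set x in s].

End KCenter.

(* Fix an optimal solution: at most [k] centers [C] and at least [n - z] inliers
   [O], each inlier within [r = r_opt] of a center.  Call a center unserved by [E]
   if some inlier of its cluster is farther than [2r] from [E].  By the triangle
   inequality one point of [E] in a cluster serves the whole cluster, and once no
   center is unserved, [O] witnesses [phi_eps(X, E) <= 2r].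
   While [phi_eps(X, E) > 2r], the [(1+eps)z] points farthest from [E] are all
   farther than [2r], and at most [z] of them are outliers, so the [m2] draws of a
   round all miss [O] with probability at most [(1+eps)^-m2 <= eta]; otherwise a
   new cluster gets served.  Hence, with [u > 0] unserved centers and [j] rounds
   left, the run succeeds with probability at least [1 - 2^u rho^j], where
   [rho = (1+eta)/2]: this is what makes
   [eta 2^u rho^j + (1-eta) 2^(u-1) rho^j = 2^u rho^(j+1)].
   The first round hits [O] except with probability [gamma^m1 <= eta], leaving
   [u <= k-1], and [t] is chosen so that [2^(k-1) rho^(t-1) <= eta]; so the run
   succeeds with probability at least [(1-eta)^2 >= 1 - 2 eta]. *)

From HB Require Import structures.
From mathcomp Require Import all_boot all_order all_algebra.
From mathcomp Require Import reals exp sequences.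
From mathcomp Require Import ring lra zify.
Set Implicit Arguments. Unset Strict Implicit. Unset Printing Implicit Defensive.
Import Order.TTheory GRing.Theory Num.Theory.
Local Open Scope ring_scope.

Section RealFacts.
Variable R : realType.

Lemma exprn_le_expR (x : R) m : 0 <= x -> x ^+ m <= expR (m%:R * (x - 1)).
Proof.
move=> x0; rewrite expRM_natl; apply: lerXn2r; rewrite ?nnegrE ?expR_ge0 //.
by have := expR_ge1Dx (x - 1); lra.
Qed.

Lemma exprn_le_of_lnV (x eta : R) m : 0 <= x -> 0 < eta ->
  ln (eta^-1) <= m%:R * (1 - x) -> x ^+ m <= eta.
Proof.
move=> x0 eta0 hm; apply: le_trans (exprn_le_expR m x0) _.
rewrite -[leRHS](@lnK _ eta) ?posrE // ler_expR.
by move: hm; rewrite lnV ?posrE //; lra.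
Qed.

Lemma ceiln_ge (x : R) : 0 <= x -> x <= (ceiln x)%:R.
Proof.
move=> x0; rewrite /ceiln natr_absz ger0_norm ?ceil_ge0 ?ceil_ge //.
by apply: lt_le_trans x0; rewrite ltrN10.
Qed.

Lemma ceiln_le_nat (x : R) (N : nat) : 0 <= x -> x <= N%:R -> (ceiln x <= N)%N.
Proof.
move=> x0 xN; rewrite /ceiln -lez_nat gez0_abs; last first.
  by rewrite ceil_ge0; apply: lt_le_trans x0; rewrite ltrN10.
by rewrite ceil_le_int.
Qed.

Lemma exprn_ceiln_le (x eta : R) : 0 <= x < 1 -> 0 < eta <= 1 ->
  x ^+ ceiln ((1 - x)^-1 * ln (eta^-1)) <= eta.
Proof.
move=> /andP[x0 x1] /andP[eta0 eta1].
have L0 : 0 <= ln (eta^-1) by rewrite ln_ge0 // invf_ge1.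
apply: exprn_le_of_lnV => //; rewrite -ler_pdivrMr ?subr_gt0 // mulrC.
by apply: ceiln_ge; rewrite mulr_ge0 // invr_ge0 subr_ge0 ltW.
Qed.

Lemma convex_comb_weight_le (a eta b1 b0 : R) : 0 <= a <= eta -> b1 <= b0 ->
  eta * b1 + (1 - eta) * b0 <= a * b1 + (1 - a) * b0.
Proof.
move=> /andP[a0 ae] b10.
have : 0 <= (eta - a) * (b0 - b1) by apply: mulr_ge0; lra.
lra.
Qed.

End RealFacts.

Section Sampling.
Variables (R : realType) (X : finType).

Lemma card_tuples_in (A : {set X}) m :
  #|[set s : m.-tuple X | all (mem A) s]| = (#|A| ^ m)%N.
Proof.
pose f (s : m.-tuple X) : {ffun 'I_m -> X} := [ffun i => tnth s i].
have f_inj : injective f.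
  move=> s1 s2 /ffunP f12; apply: eq_from_tnth => i.
  by have := f12 i; rewrite !ffunE.
rewrite -(card_imset _ f_inj).
have -> : f @: [set s : m.-tuple X | all (mem A) s] = [set g in ffun_on A].
  apply/setP => g; rewrite inE; apply/imsetP/idP.
    move=> [s]; rewrite inE => /allP sA ->; apply/ffun_onP => i.
    by rewrite ffunE; apply: sA; exact: mem_tnth.
  move/ffun_onP => gA; exists [tuple g i | i < m].
    by rewrite inE; apply/allP => x /mapP [i _ ->]; apply: gA.
  by apply/ffunP => i; rewrite ffunE tnth_mktuple.
by rewrite cardsE card_ffun_on card_ord.
Qed.

Lemma sum_tuples_in (A : {set X}) m :
  \sum_(s : m.-tuple X | all (mem A) s) (1 : R) = (#|A| ^ m)%:R.
Proof.
rewrite sumr_const -card_tuples_in; congr (_ *+ _).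
by apply: eq_card => s; rewrite inE.
Qed.

(* [(|T| / |S|)^m] is the probability that [m] uniform draws from [S] all land
   in [T]. *)
Lemma sample_mean_ge (S T : {set X}) m (F : m.-tuple X -> R) (b1 b0 : R) :
  T \subset S -> (0 < #|S|)%N ->
  (forall s : m.-tuple X, all (mem T) s -> b1 <= F s) ->
  (forall s : m.-tuple X, all (mem S) s -> ~~ all (mem T) s -> b0 <= F s) ->
  (#|T|%:R / #|S|%:R) ^+ m * b1 + (1 - (#|T|%:R / #|S|%:R) ^+ m) * b0 <=
    (#|S| ^ m)%:R^-1 * \sum_(s : m.-tuple X | all (mem S) s) F s.
Proof.
move=> sTS S0 FT FS.
have allT (s : m.-tuple X) : all (mem S) s && all (mem T) s = all (mem T) s.
  apply/andb_idl => /allP sT; apply/allP => x /sT; exact: (subsetP sTS).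
rewrite (bigID (fun s : m.-tuple X => all (mem T) s)) /= (eq_bigl _ _ allT).
set NS := (#|S| ^ m)%:R : R; set NT := (#|T| ^ m)%:R : R.
have NS0 : 0 < NS by rewrite ltr0n expn_gt0 S0.
have sumT : NT * b1 <= \sum_(s : m.-tuple X | all (mem T) s) F s.
  by rewrite /NT -sum_tuples_in mulr_suml; apply: ler_sum => s sT; rewrite mul1r FT.
have sumST : (NS - NT) * b0 <=
    \sum_(s : m.-tuple X | all (mem S) s && ~~ all (mem T) s) F s.
  have -> : NS - NT =
      \sum_(s : m.-tuple X | all (mem S) s && ~~ all (mem T) s) (1 : R).
    rewrite /NS /NT -!sum_tuples_in.
    rewrite (bigID (fun s : m.-tuple X => all (mem T) s) (fun s => all (mem S) s)).
    by rewrite /= (eq_bigl _ _ allT) addrC addrK.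
  by rewrite mulr_suml; apply: ler_sum => s /andP[sS sT]; rewrite mul1r FS.
have -> : (#|T|%:R / #|S|%:R) ^+ m * b1 + (1 - (#|T|%:R / #|S|%:R) ^+ m) * b0
    = NS^-1 * (NT * b1 + (NS - NT) * b0).
  by rewrite expr_div_n -!natrX -/NS -/NT; field; rewrite lt0r_neq0.
by apply: ler_wpM2l; [rewrite invr_ge0 ltW | exact: lerD].
Qed.

End Sampling.

Section Distances.
Variables (R : realType) (X : finType) (d : X -> X -> R).

Lemma diam_ge0 : 0 <= diam d. Proof. exact: bigmax_ge_id. Qed.

Lemma dist_le_diam p q : d p q <= diam d.
Proof. by apply: (bigmax_sup p) => //; apply: (bigmax_sup q). Qed.

Lemma distS_le_dist p (E : {set X}) q : q \in E -> distS d p E <= d p q.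
Proof. by move=> qE; apply: bigmin_le_cond. Qed.

Lemma distS_le_diam p (E : {set X}) : distS d p E <= diam d.
Proof. exact: bigmin_le_id. Qed.

Lemma le_distS_subset p (E E' : {set X}) :
  E \subset E' -> distS d p E' <= distS d p E.
Proof.
move=> sEE'; apply: le_bigmin; first exact: distS_le_diam.
by move=> q qE; apply: distS_le_dist; exact: (subsetP sEE').
Qed.

Lemma distS_attained p (E : {set X}) q0 : q0 \in E ->
  exists2 q, q \in E & distS d p E = d p q.
Proof.
move=> q0E; rewrite /distS.
have [q qE ->] := eq_bigmin q0 (fun q => q \in E) (d p) q0E
  (fun q _ => dist_le_diam p q).
by exists q.
Qed.

Lemma radius_le (Xp E : {set X}) x : 0 <= x ->
  (forall p, p \in Xp -> distS d p E <= x) -> radius d Xp E <= x.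
Proof. by move=> x0 Xp_x; apply: bigmax_le. Qed.

Lemma radius_ge0 (Xp E : {set X}) : 0 <= radius d Xp E.
Proof. exact: bigmax_ge_id. Qed.

Lemma distS_le_radius p (Xp E : {set X}) : p \in Xp -> distS d p E <= radius d Xp E.
Proof. by move=> pXp; apply: (bigmax_sup p). Qed.

Lemma le_radius_subset (Xp E E' : {set X}) :
  E \subset E' -> radius d Xp E' <= radius d Xp E.
Proof.
move=> sEE'; apply: radius_le; first exact: radius_ge0.
by move=> p pXp; apply: le_trans (le_distS_subset p sEE') (distS_le_radius _ pXp).
Qed.

Lemma radius_le_diam (Xp E : {set X}) : radius d Xp E <= diam d.
Proof. by apply: radius_le => [|p _]; [exact: diam_ge0 | exact: distS_le_diam]. Qed.

Lemma phi_le_radius eps z (Xp E : {set X}) :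
  #|X|%:R - (1 + eps) * z%:R <= #|Xp|%:R -> phi d eps z E <= radius d Xp E.
Proof. by move=> Xp_big; apply: (bigmin_le_cond _ _ Xp_big). Qed.

Lemma le_phi_subset eps z (E E' : {set X}) :
  E \subset E' -> phi d eps z E' <= phi d eps z E.
Proof.
move=> sEE'; apply: le_bigmin; first exact: bigmin_le_id.
move=> Xp Xp_big.
exact: le_trans (phi_le_radius _ Xp_big) (le_radius_subset _ sEE').
Qed.

Lemma r_opt_ge0 k z : 0 <= r_opt d k z.
Proof.
apply: le_bigmin => [|c _]; first exact: diam_ge0.
by apply: le_bigmin => [|Xp _]; [exact: diam_ge0 | exact: radius_ge0].
Qed.

Lemma r_opt_solution k z : (0 < k)%N -> (0 < #|X|)%N ->
  exists C O : {set X}, [/\ (#|C| <= k)%N, (#|X| - z <= #|O|)%N &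
    forall p, p \in O -> exists2 q, q \in C & d p q <= r_opt d k z].
Proof.
move=> k0 /card_gt0P[x0 _]; rewrite /r_opt.
have [c _ ->] := eq_bigmin [tuple x0 | _ < k] xpredT
  (fun c : k.-tuple X =>
     \big[Num.min/diam d]_(Xp : {set X} | (#|X| - z <= #|Xp|)%N)
       radius d Xp [set x in c]) isT (fun c _ => bigmin_le_id _ _ _ _).
have O0 : (#|X| - z <= #|[set: X]|)%N by rewrite cardsT leq_subr.
have [O O_big ->] := eq_bigmin setT (fun Xp : {set X} => (#|X| - z <= #|Xp|)%N)
  (fun Xp => radius d Xp [set x in c]) O0 (fun Xp _ => radius_le_diam _ _).
exists [set x in c], O; split => //.
  by rewrite cardsE; apply: leq_trans (card_size c) _; rewrite size_tuple.
move=> p pO; have c0 : tnth c (Ordinal k0) \in [set x in c] by rewrite inE mem_tnth.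
have [q qc dpq] := distS_attained p c0.
by exists q; rewrite // -dpq distS_le_radius.
Qed.

End Distances.

Section FarthestRule.
Variables (R : realType) (X : finType) (d : X -> X -> R).
Variables (eps : R) (z : nat) (sel : {set X} -> {set X}).
Hypotheses (eps0 : 0 < eps) (sel_farthest : farthest_rule d eps z sel).

Definition far_from (rho : R) (E : {set X}) : {set X} :=
  [set p | rho < distS d p E].

Lemma sel_card_gt0 E : (0 < z)%N -> (0 < #|X|)%N -> (0 < #|sel E|)%N.
Proof.
move=> z0 n0; rewrite (sel_farthest E).1 leq_min n0 /= lt0n.
have zeps : 0 < (1 + eps) * z%:R by apply: mulr_gt0; rewrite ?ltr0n // addr_gt0.
apply: contraTneq (ceiln_ge (ltW zeps)) => ->; lra.
Qed.

Section AboveThreshold.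
Variables (rho : R) (E : {set X}).
Hypotheses (rho0 : 0 <= rho) (phi_gt : rho < phi d eps z E).

Lemma far_from_card_gt : (1 + eps) * z%:R < #|far_from rho E|%:R.
Proof.
rewrite ltNge; apply/negP => far_small.
have near_big : #|X|%:R - (1 + eps) * z%:R <= #|~: far_from rho E|%:R.
  have := congr1 (fun n : nat => n%:R : R) (cardsC (far_from rho E)).
  by rewrite natrD; lra.
have : phi d eps z E <= rho.
  apply: le_trans (phi_le_radius _ E near_big) _.
  by apply: radius_le => // p; rewrite !inE -leNgt.
by rewrite leNgt phi_gt.
Qed.

Lemma ceiln_le_far_from : (ceiln ((1 + eps) * z%:R) <= #|far_from rho E|)%N.
Proof.
apply: ceiln_le_nat; last exact: ltW far_from_card_gt.
by rewrite mulr_ge0 // addr_ge0 // ltW.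
Qed.

(* A near point in [sel E] forces the whole far set into [sel E], but the far
   set is at least as large as [sel E]. *)
Lemma farthest_sub_far_from : sel E \subset far_from rho E.
Proof.
have [sel_card sel_far] := sel_farthest E.
apply/subsetP => s sS; apply/negPn/negP => s_near.
have far_sub : far_from rho E \subset sel E.
  apply/subsetP => p p_far; apply/negPn/negP => pS.
  move: (sel_far p s sS pS) p_far s_near; rewrite !inE -leNgt; lra.
have card_eq : #|far_from rho E| = #|sel E|.
  apply/eqP; rewrite eqn_leq subset_leq_card //= sel_card.
  exact: leq_trans (geq_minr _ _) ceiln_le_far_from.
by move: s_near; rewrite (subset_cardP card_eq far_sub) sS.
Qed.

Lemma farthest_card_ge : (1 + eps) * z%:R <= #|sel E|%:R.
Proof.
rewrite (sel_farthest E).1; case: (leqP #|X| (ceiln ((1 + eps) * z%:R))) => _.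
  by apply: le_trans (ltW far_from_card_gt) _; rewrite ler_nat max_card.
by apply: ceiln_ge; rewrite mulr_ge0 // addr_ge0 // ltW.
Qed.

End AboveThreshold.
End FarthestRule.

Section SuccessProbability.
Variables (R : realType) (X : finType).
Variables (P : {set X} -> bool) (sel : {set X} -> {set X}) (m : nat).

Lemma succ_from_ge0 j E : 0 <= succ_from R P sel m j E.
Proof.
elim: j E => [|j IHj] E /=; first exact: ler0n.
by rewrite mulr_ge0 ?invr_ge0 ?ler0n // sumr_ge0.
Qed.

Lemma succ_from_eq1 j E :
  (forall E A, P E -> P (E :|: A)) -> (forall E, (0 < #|sel E|)%N) ->
  P E -> succ_from R P sel m j E = 1.
Proof.
move=> P_up sel0; elim: j E => [|j IHj] E PE /=; first by rewrite PE.
rewrite (eq_bigr (fun _ => 1)) => [|s _]; last exact/IHj/P_up.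
by rewrite sum_tuples_in mulVf // pnatr_eq0 -lt0n expn_gt0 sel0.
Qed.

End SuccessProbability.

Section Potential.
Variables (R : realType) (eta : R).
Hypotheses (eta0 : 0 < eta) (eta1 : eta < 1).

Definition potential (j u : nat) : R :=
  if u == 0%N then 0 else 2 ^+ u * ((1 + eta) / 2) ^+ j.

Let half_ge0 : 0 <= (1 + eta) / 2.
Proof. by rewrite divr_ge0 // addr_ge0 // ltW. Qed.

Lemma potential_ge0 j u : 0 <= potential j u.
Proof. by rewrite /potential; case: eqP => // _; rewrite mulr_ge0 ?exprn_ge0. Qed.

Lemma le_potential j u v : (u <= v)%N -> potential j u <= potential j v.
Proof.
rewrite /potential; case: eqP => [_ _|/eqP u0 uv]; first exact: (potential_ge0 j v).
have /negPf -> : v != 0%N by rewrite -lt0n (leq_trans _ uv) // lt0n.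
by rewrite ler_wpM2r ?exprn_ge0 ?ler_eXn2l ?ltr1n.
Qed.

Lemma potential_step j u : (0 < u)%N ->
  eta * potential j u + (1 - eta) * potential j u.-1 <= potential j.+1 u.
Proof.
move=> u0; have /negPf u_neq0 : u != 0%N by rewrite -lt0n.
set a := 2 ^+ u.-1 * ((1 + eta) / 2) ^+ j.
have -> : potential j u = 2 * a.
  by rewrite /potential u_neq0 -{1}(prednK u0) exprS mulrA.
have -> : potential j.+1 u = (1 + eta) * a.
  by rewrite /potential u_neq0 -{1}(prednK u0) !exprS /a; field.
have : (1 - eta) * potential j u.-1 <= (1 - eta) * a.
  apply: ler_wpM2l; first by rewrite subr_ge0 ltW.
  by rewrite /potential; case: eqP => // _; rewrite mulr_ge0 ?exprn_ge0.
lra.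
Qed.

End Potential.

(* With [t (1 - eta) >= 2k + 2 ln(1/eta)] rounds, the factor [((1+eta)/2)^(t-1)
   <= exp(-(t-1)(1-eta)/2)] beats [2^(k-1) <= exp(k-1)] by a factor [eta]. *)
Lemma potential_le_eta (R : realType) (eta : R) k t :
  0 < eta -> eta < 1 -> (0 < k)%N ->
  (2 + 2 / (k%:R * (1 - eta)) * ln (eta^-1)) * k%:R / (1 - eta) <= t%:R ->
  potential eta t.-1 k.-1 <= eta.
Proof.
move=> eta0 eta1 k0 t_big; rewrite /potential; case: eqP => [_|_]; first exact: ltW.
set L := ln (eta^-1) in t_big *.
have L0 : 0 <= L by rewrite ln_ge0 // invf_ge1 // ltW.
have k_gt0 : 0 < k%:R :> R by rewrite ltr0n.
have tk : 2 * k%:R + 2 * L <= t%:R * (1 - eta).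
  rewrite -ler_pdivrMr ?subr_gt0 //; apply: le_trans t_big.
  have -> : (2 + 2 / (k%:R * (1 - eta)) * L) * k%:R / (1 - eta)
      = (2 * k%:R + 2 * L / (1 - eta)) / (1 - eta).
    by field; rewrite gt_eqF //=; lra.
  apply: ler_wpM2r; first by rewrite invr_ge0 subr_ge0 ltW.
  rewrite lerD2l ler_pdivlMr ?subr_gt0 //.
  by have := mulr_ge0 L0 (ltW eta0); lra.
have t0 : (0 < t)%N.
  by rewrite lt0n; apply/eqP => t0; move: tk; rewrite t0 mul0r; lra.
have half_ge0 : 0 <= (1 + eta) / 2 by lra.
apply: le_trans (ler_pM (exprn_ge0 _ (ler0n R 2)) (exprn_ge0 _ half_ge0)
  (exprn_le_expR k.-1 (ler0n R 2)) (exprn_le_expR t.-1 half_ge0)) _.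
have lnE : ln eta = - L by rewrite /L lnV ?posrE // opprK.
rewrite -expRD -[leRHS](@lnK _ eta) ?posrE // ler_expR lnE.
have : t%:R = (t.-1)%:R + 1 :> R by rewrite natr1 prednK.
have : k%:R = (k.-1)%:R + 1 :> R by rewrite natr1 prednK.
nra.
Qed.

Section Clusters.
Variables (R : realType) (X : finType) (d : X -> X -> R).
Hypothesis d_metric : is_metric d.
Variables (C O : {set X}) (r : R).
Hypothesis O_covered : forall p, p \in O -> exists2 q, q \in C & d p q <= r.

Definition cluster (q : X) : {set X} := [set p in O | d p q <= r].

Definition unserved (E : {set X}) : {set X} :=
  [set q in C | [exists p in cluster q, 2 * r < distS d p E]].

Lemma mem_cluster p : p \in O -> exists2 q, q \in C & p \in cluster q.
Proof.
by move=> pO; have [q qC pq] := O_covered pO; exists q; rewrite // inE pO.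
Qed.

Lemma unserved_sub_centers E : unserved E \subset C.
Proof. by apply/subsetP => q; rewrite inE => /andP[]. Qed.

Lemma unserved_subset (E E' : {set X}) :
  E \subset E' -> unserved E' \subset unserved E.
Proof.
move=> sEE'; apply/subsetP => q; rewrite !inE => /andP[-> /existsP[p /andP[pq far]]].
by apply/existsP; exists p; rewrite pq (lt_le_trans far (le_distS_subset _ _ sEE')).
Qed.

(* Two points of a cluster are within [2r] of each other, through its center. *)
Lemma cluster_served (E : {set X}) x q :
  x \in E -> x \in cluster q -> q \notin unserved E.
Proof.
case: d_metric => _ _ d_sym d_tri xE; rewrite inE => /andP[_ xq].
rewrite inE negb_and; apply/orP; right; apply/existsP => -[p /andP[]].
rewrite inE => /andP[_ pq]; apply/negP; rewrite -leNgt.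
apply: le_trans (distS_le_dist _ _ xE) _.
by apply: le_trans (d_tri p q x) _; rewrite (d_sym q x); lra.
Qed.

Lemma served_radius_le E : 0 <= r -> unserved E = set0 -> radius d O E <= 2 * r.
Proof.
move=> r0 served; apply: radius_le => [|p pO]; first lra.
have [q qC pq] := mem_cluster pO; rewrite leNgt; apply/negP => far.
have : q \in unserved E by rewrite inE qC; apply/existsP; exists p; rewrite pq.
by rewrite served inE.
Qed.

Lemma unserved_card_lt_C (E : {set X}) x : x \in E -> x \in O ->
  (#|unserved E| < #|C|)%N.
Proof.
move=> xE xO; have [q qC xq] := mem_cluster xO; apply: proper_card.
apply/properP; split; first exact: unserved_sub_centers.
by exists q => //; exact: cluster_served xq.
Qed.

Lemma unserved_card_decr (E E' : {set X}) x :
  E \subset E' -> x \in E' -> x \in O -> 2 * r < distS d x E ->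
  (#|unserved E'| < #|unserved E|)%N.
Proof.
move=> sEE' xE' xO far; have [q qC xq] := mem_cluster xO; apply: proper_card.
apply/properP; split; first exact: unserved_subset.
exists q; last exact: cluster_served xq.
by rewrite inE qC; apply/existsP; exists x; rewrite xq.
Qed.

End Clusters.

Section Analysis.
Variables (R : realType) (X : finType) (d : X -> X -> R).
Hypothesis d_metric : is_metric d.
Variables (k z : nat) (eps eta : R) (sel : {set X} -> {set X}).
Hypotheses (k0 : (0 < k)%N) (z0 : (0 < z)%N) (zn : (z < #|X|)%N)
  (eps0 : 0 < eps) (eta0 : 0 < eta) (eta1 : eta < 1)
  (sel_farthest : farthest_rule d eps z sel).
Variables (C O : {set X}) (r : R).
Hypotheses (C_card : (#|C| <= k)%N) (O_card : (#|X| - z <= #|O|)%N)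
  (O_covered : forall p, p \in O -> exists2 q, q \in C & d p q <= r) (r0 : 0 <= r).
Variable m : nat.
Hypothesis m_large : (1 + eps)^-1 ^+ m <= eta.

Local Notation success := (fun E => phi d eps z E <= 2 * r).
Local Notation succ := (succ_from R success sel m).
Local Notation unserved_by := (unserved d C O r).

Let sel_gt0 E : (0 < #|sel E|)%N.
Proof. exact: sel_card_gt0 eps0 sel_farthest E z0 (leq_ltn_trans (leq0n z) zn). Qed.

Lemma outliers_card : (#|~: O| <= z)%N.
Proof. by have := cardsC O; lia. Qed.

Lemma inliers_large : #|X|%:R - (1 + eps) * z%:R <= #|O|%:R :> R.
Proof.
have : (#|X| <= #|O| + z)%N by lia.
rewrite -(ler_nat R) natrD; have := mulr_ge0 (ltW eps0) (ler0n R z); lra.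
Qed.

Lemma served_success E : unserved_by E = set0 -> success E.
Proof.
move=> served; apply: le_trans (phi_le_radius _ E inliers_large) _.
exact: served_radius_le O_covered _ r0 served.
Qed.

Lemma success_setU E A : success E -> success (E :|: A).
Proof. exact/le_trans/le_phi_subset/subsetUl. Qed.

(* At most [z] of the at least [(1+eps) z] farthest points are outliers. *)
Lemma miss_inliers_le E : 2 * r < phi d eps z E ->
  (#|sel E :\: O|%:R / #|sel E|%:R) ^+ m <= eta.
Proof.
move=> far_phi; apply: le_trans m_large.
have sel_big := farthest_card_ge eps0 sel_farthest (mulr_ge0 (ler0n R 2) r0) far_phi.
have out_z : #|sel E :\: O|%:R <= z%:R :> R.
  rewrite ler_nat (leq_trans _ outliers_card) //.
  by rewrite subset_leq_card // setDE subsetIr.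
apply: lerXn2r; rewrite ?nnegrE ?divr_ge0 //.
  by rewrite invr_ge0 addr_ge0 // ltW.
rewrite ler_pdivrMr ?ltr0n ?sel_gt0 // mulrC ler_pdivlMr; last by have := eps0; lra.
by have := ler_wpM2l (ltW eps0) out_z; lra.
Qed.

Lemma succ_ge_potential_step j E :
  (forall E', 1 - potential eta j #|unserved_by E'| <= succ j E') ->
  1 - potential eta j.+1 #|unserved_by E| <= succ j.+1 E.
Proof.
move=> IHj; set u := #|unserved_by E|.
have [E_ok|E_bad] := boolP (success E).
  rewrite succ_from_eq1 //; last exact: success_setU.
  by have := potential_ge0 eta0 j.+1 u; lra.
have far_phi : 2 * r < phi d eps z E by rewrite ltNge.
have r2 : 0 <= 2 * r by rewrite mulr_ge0.
have u0 : (0 < u)%N.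
  by rewrite lt0n; apply: contra E_bad => /eqP/cards0_eq; exact: served_success.
have sel_far := farthest_sub_far_from eps0 sel_farthest r2 far_phi.
apply: le_trans (sample_mean_ge (T := sel E :\: O)
  (b1 := 1 - potential eta j u) (b0 := 1 - potential eta j u.-1)
  (subsetDl _ _) (sel_gt0 E) _ _).
- apply: le_trans (convex_comb_weight_le (eta := eta) _ _).
  + by have := potential_step eta0 eta1 j u0; lra.
  + by rewrite exprn_ge0 ?divr_ge0 //= miss_inliers_le.
  + by rewrite lerD2l lerN2 (le_potential eta0) ?leq_pred.
- move=> s _; apply: le_trans (IHj _); rewrite lerD2l lerN2 (le_potential eta0) //.
  exact/subset_leq_card/unserved_subset/subsetUl.
- move=> s sS /allPn[x xs xnO]; have xS : x \in sel E := allP sS x xs.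
  have xO : x \in O by move: xnO; rewrite !inE xS andbT negbK.
  apply: le_trans (IHj _); rewrite lerD2l lerN2 (le_potential eta0) //.
  rewrite -ltnS prednK //.
  apply: (unserved_card_decr d_metric O_covered (x := x)) => //.
  + exact: subsetUl.
  + by rewrite !inE xs orbT.
  + by have := subsetP sel_far x xS; rewrite inE.
Qed.

Lemma succ_ge_potential j E : 1 - potential eta j #|unserved_by E| <= succ j E.
Proof.
elim: j E => [|j IHj] E; last exact: succ_ge_potential_step.
rewrite /= /potential; case: eqP => [/cards0_eq/served_success -> | _].
  by rewrite subr0.
by apply: le_trans (ler0n _ _); rewrite subr_le0 expr0 mulr1 exprn_ege1 // ler1n.
Qed.

Lemma first_round_success_ge m1 t :
  (z%:R / #|X|%:R) ^+ m1 <= eta -> potential eta t.-1 k.-1 <= eta ->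
  1 - 2 * eta <=
    (#|X| ^ m1)%:R^-1 * \sum_(s : m1.-tuple X) succ t.-1 [set x in s].
Proof.
move=> m1_large t_large; have n0 : (0 < #|X|)%N by apply: leq_ltn_trans zn.
rewrite -cardsT in n0 m1_large *.
rewrite (eq_bigl (fun s : m1.-tuple X => all (mem [set: X]) s)) => [|s]; last first.
  by apply/esym/allP => x; rewrite inE.
set G := potential eta t.-1 k.-1 in t_large *.
apply: le_trans (sample_mean_ge (T := ~: O) (b1 := 0) (b0 := 1 - G)
  (subsetT _) n0 _ _).
- apply: le_trans (convex_comb_weight_le (eta := eta) _ _); last 2 first.
  + rewrite exprn_ge0 ?divr_ge0 //=; apply: le_trans m1_large.
    apply: lerXn2r; rewrite ?nnegrE ?divr_ge0 // ler_pM2r ?invr_gt0 ?ltr0n //.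
    by rewrite ler_nat outliers_card.
  + by rewrite subr_ge0; have := eta1; lra.
  have : (1 - eta) * (1 - eta) <= (1 - eta) * (1 - G).
    by rewrite ler_wpM2l; have := eta1; lra.
  by nra.
- by move=> s _; exact: succ_from_ge0.
- move=> s _ /allPn[x xs]; rewrite !inE negbK => xO.
  apply: le_trans (succ_ge_potential _ _).
  rewrite lerD2l lerN2 (le_potential eta0) // -ltnS prednK //.
  rewrite (leq_trans _ C_card) //.
  by apply: (unserved_card_lt_C d_metric O_covered (x := x)); rewrite ?inE.
Qed.

End Analysis.

Theorem theorem5 (R : realType) (X : finType) (d : X -> X -> R)
  (k z : nat) (eps eta : R) (sel : {set X} -> {set X}) :
  is_metric d ->
  (0 < k)%N -> (0 < z)%N -> (z < #|X|)%N ->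
  0 < eps -> 0 < eta -> eta < 1 / 2 ->
  farthest_rule d eps z sel ->
  1 - 2 * eta <=
    alg1_prob (fun E => phi d eps z E <= 2 * r_opt d k z) sel k z eps eta.
Proof.
move=> d_metric k0 z0 zn eps0 eta0 eta_half sel_farthest.
have n0 : (0 < #|X|)%N by apply: leq_ltn_trans zn.
have [C [O [C_card O_card O_covered]]] := r_opt_solution d z k0 n0.
have eta1 : eta < 1 by lra.
have eta01 : 0 < eta <= 1 by rewrite eta0 ltW.
rewrite /alg1_prob /=.
apply: (first_round_success_ge d_metric k0 z0 zn eps0 eta0 eta1 sel_farthest
  C_card O_card O_covered (r_opt_ge0 d k z)).
- have -> : (1 + eps) / eps = (1 - (1 + eps)^-1)^-1 by field; lra.
  have eps1 : 0 < 1 + eps by lra.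
  by apply: exprn_ceiln_le => //; rewrite invr_ge0 ltW //= invf_lt1 //; lra.
- apply: exprn_ceiln_le => //; rewrite divr_ge0 //= ltr_pdivrMr ?ltr0n //.
  by rewrite mul1r ltr_nat.
- apply: potential_le_eta k0 (ceiln_ge _) => //.
  have L0 : 0 <= ln (eta^-1) by rewrite ln_ge0 // invf_ge1 // ltW.
  have eta1' : 0 <= 1 - eta by rewrite subr_ge0 ltW.
  by rewrite divr_ge0 // mulr_ge0 // addr_ge0 // mulr_ge0 // divr_ge0 // mulr_ge0.
Qed.
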